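(* Let $B$ be a minimum-weight basis of the weighted uncertainty matroid $\mathcal{M}=(E,\mathcal{I},A,w)$ and let $Q$ be a certificate that verifies $B$. Let $e\in B$ and $e'\notin B$ with $w_e=w_{e'}$ be such that $B'=(B\setminus\{e\})\cup\{e'\}$ is independent. If each $f\in\{e,e'\}$ is either trivial or contained in $Q$, then $Q$ also verifies $B'$.
   Context: A weighted uncertainty matroid $\mathcal{M}=(E,\mathcal{I},A,w)$ consists of a matroid $M=(E,\mathcal{I})$ on a finite set $E$, for each $e\in E$ a non-empty finite union $A_e$ of bounded real intervals (each open or closed), and a weight $w_e\in A_e$. An element $e$ is trivial if $A_e=\{w_e\}$. A minimum-weight basis is a basis of $M$ minimizing the sum of weights. A weight assignment is $w^*:E\to\mathbb{R}$ with $w^*_e\in A_e$, consistent with $Q$ if $w^*_e=w_e$ for $e\in Q$. $Q$ verifies a basis $B$ (is a certificate for $B$) if for every weight assignment consistent with $Q$, $B$ is a minimum-weight basis with respect to it. *)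

From mathcomp Require Import all_boot all_order all_algebra.
Set Implicit Arguments. Unset Strict Implicit. Unset Printing Implicit Defensive.
Import Order.TTheory GRing.Theory Num.Theory.
Local Open Scope ring_scope.

Record matroid (E : finType) := Matroid {
  indep : {set E} -> bool;
  indep0 : indep set0;
  indep_sub : forall X Y : {set E}, X \subset Y -> indep Y -> indep X;
  indep_exch : forall X Y : {set E}, indep X -> indep Y -> (#|X| < #|Y|)%N ->
     exists2 y, y \in Y :\: X & indep (y |: X)
}.

Definition is_basis (E : finType) (M : matroid E) (B : {set E}) : Prop :=
  indep M B /\ forall X : {set E}, B \proper X -> ~~ indep M X.

Definition set_weight (E : finType) (R : numDomainType) (w : E -> R) (B : {set E}) : R :=
  \sum_(e in B) w e.

Definition min_weight_basis (E : finType) (R : numDomainType) (M : matroid E)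
    (w : E -> R) (B : {set E}) : Prop :=
  is_basis M B /\ forall B' : {set E}, is_basis M B' -> set_weight w B <= set_weight w B'.

Record bounded_itv (R : realFieldType) := BItv { itv_lo : R; itv_hi : R; itv_closed : bool }.

Definition in_bitv (R : realFieldType) (x : R) (I : bounded_itv R) : bool :=
  if itv_closed I then (itv_lo I <= x) && (x <= itv_hi I)
  else (itv_lo I < x) && (x < itv_hi I).

Definition area (R : realFieldType) := seq (bounded_itv R).

Definition in_area (R : realFieldType) (x : R) (A : area R) : bool := has (in_bitv x) A.

Definition area_nonempty (R : realFieldType) (A : area R) : Prop := exists x, in_area x A.

Record wu_matroid (E : finType) (R : realFieldType) := WUMatroid {
  wu_M : matroid E;
  wu_A : E -> area R;
  wu_w : E -> R;
  wu_A_nonempty : forall e, area_nonempty (wu_A e);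
  wu_w_in : forall e, in_area (wu_w e) (wu_A e)
}.

Definition trivial_elt (E : finType) (R : realFieldType) (U : wu_matroid E R) (e : E) : Prop :=
  forall x : R, in_area x (wu_A U e) <-> x = wu_w U e.

Definition weight_assignment (E : finType) (R : realFieldType) (U : wu_matroid E R)
    (ws : E -> R) : Prop := forall e, in_area (ws e) (wu_A U e).

Definition consistent_with (E : finType) (R : realFieldType) (U : wu_matroid E R)
    (Q : {set E}) (ws : E -> R) : Prop := forall e, e \in Q -> ws e = wu_w U e.

Definition verifies (E : finType) (R : realFieldType) (U : wu_matroid E R)
    (Q B : {set E}) : Prop :=
  forall ws : E -> R, weight_assignment U ws -> consistent_with U Q ws ->
    min_weight_basis (wu_M U) ws B.

From mathcomp Require Import all_boot all_order all_algebra.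
Set Implicit Arguments. Unset Strict Implicit. Unset Printing Implicit Defensive.
Import Order.TTheory GRing.Theory Num.Theory.
Local Open Scope ring_scope.

(* Fix a weight assignment consistent with Q. By assumption B is a minimum-weight
   basis for it, and the hypothesis on e and e' forces their weights to be the
   common value w_e = w_e'. Hence the exchange B' has the same weight as B; being
   independent of the same size as a basis, it is a basis, so it is also of
   minimum weight. *)

Section MatroidBasis.

Variables (E : finType) (M : matroid E).

Lemma is_basis_card_indep (B X : {set E}) :
  is_basis M B -> indep M X -> #|X| = #|B| -> is_basis M X.
Proof.
move=> [iB maxB] iX cardX; split=> // Y XY; apply/negP => iY.
have ltBY : (#|B| < #|Y|)%N by rewrite -cardX proper_card.
have [y /setDP[yY yNB] iyB] := indep_exch iB iY ltBY.
have : B \proper y |: B by rewrite properUr ?sub1set.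
by move/maxB; rewrite iyB.
Qed.

End MatroidBasis.

Section Exchange.

Variables (E : finType) (e e' : E) (B : {set E}).
Hypotheses (eB : e \in B) (e'NB : e' \notin B).

Lemma notin_setD1_exchange : e' \notin B :\ e.
Proof. by rewrite in_setD1 (negbTE e'NB) andbF. Qed.

Lemma card_exchange : #|e' |: (B :\ e)| = #|B|.
Proof. by rewrite cardsU1 notin_setD1_exchange (cardsD1 e B) eB. Qed.

Lemma set_weight_exchange (R : numDomainType) (w : E -> R) :
  w e = w e' -> set_weight w (e' |: (B :\ e)) = set_weight w B.
Proof.
move=> we.
by rewrite /set_weight big_setU1 ?notin_setD1_exchange //= (big_setD1 e eB) we.
Qed.

End Exchange.

Lemma min_weight_basis_eq_weight (E : finType) (R : numDomainType) (M : matroid E)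
    (w : E -> R) (B X : {set E}) :
  min_weight_basis M w B -> is_basis M X -> set_weight w X = set_weight w B ->
  min_weight_basis M w X.
Proof. by move=> [_ minB] bX wX; split=> // Y bY; rewrite wX minB. Qed.

Lemma consistent_weight_fixed (E : finType) (R : realFieldType) (U : wu_matroid E R)
    (Q : {set E}) (ws : E -> R) (f : E) :
  weight_assignment U ws -> consistent_with U Q ws ->
  trivial_elt U f \/ f \in Q -> ws f = wu_w U f.
Proof. by move=> hws hc [triv | fQ]; [apply/triv | apply: hc]. Qed.

Theorem lemma12 (E : finType) (R : realFieldType) (U : wu_matroid E R)
    (B Q : {set E}) (e e' : E) :
  min_weight_basis (wu_M U) (wu_w U) B ->
  verifies U Q B ->
  e \in B -> e' \notin B ->
  wu_w U e = wu_w U e' ->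
  indep (wu_M U) (e' |: (B :\ e)) ->
  (trivial_elt U e \/ e \in Q) ->
  (trivial_elt U e' \/ e' \in Q) ->
  verifies U Q (e' |: (B :\ e)).
Proof.
move=> _ verB eB e'NB we iB' he he' ws hws hc.
have minB := verB ws hws hc.
have wse : ws e = ws e'.
  by rewrite !(consistent_weight_fixed hws hc) ?we.
apply: (min_weight_basis_eq_weight minB).
  by apply: (is_basis_card_indep minB.1 iB'); rewrite card_exchange.
exact: set_weight_exchange.
Qed.
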